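(* Let $\mathcal U$ be a finite nonempty set, $\epsilon_1,\epsilon_2\in(0,1]$, $n_b$ a positive integer, and for each $v\in\mathcal U$ let $a_v\ge0$ be an integer, $\mu_v\in\mathbb R$ and $\sigma_v^2\ge0$. For $p\in I:=[\max\{\epsilon_1,\epsilon_2\},1]$ define $$h_v(p)=\Big(\frac1{\epsilon_2}-\frac1p\Big)a_v^2\mu_v^2n_b+\Big(\frac1{\epsilon_1}-\frac1p\Big)a_v(\mu_v^2+\sigma_v^2)n_b^2+\Big(\frac{p}{\epsilon_1\epsilon_2}-\frac1{\epsilon_1}-\frac1{\epsilon_2}+\frac1p\Big)a_v(\mu_v^2+\sigma_v^2)n_b+\Big(\frac1p-1\Big)a_v^2\mu_v^2n_b^2,$$ $h^*(p)=\max_{v\in\mathcal U}h_v(p)$, and $h'(p)=\max\{h_{v_1}(p),h_{v_2}(p)\}$, where $v_1\in\arg\max_v a_v^2\mu_v^2$ and $v_2\in\arg\max_v a_v(\mu_v^2+\sigma_v^2)$. Let $p'\in\arg\min_{p\in I}h'(p)$ and $p^*\in\arg\min_{p\in I}h^*(p)$. Then $h^*(p')\le 2h^*(p^* )$.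
   Context: Interpretation: $h_v(p)$ is the variance of the SUM join estimator when both tables use universe sampling rate $p$ and uniform sampling rates $\epsilon_1/p$, $\epsilon_2/p$, and all $n_b$ tuples of the second table have join value $v$; $a_v$ is the number of tuples of the first table with join value $v$, and $\mu_v,\sigma_v^2$ are the mean and variance of the aggregated column over those tuples. $h^*$ is the worst-case variance over such concentrated second tables. *)

From HB Require Import structures.
From mathcomp Require Import all_boot all_order all_algebra.
Set Implicit Arguments. Unset Strict Implicit. Unset Printing Implicit Defensive.
Import Order.TTheory GRing.Theory Num.Theory.
Local Open Scope ring_scope.

(* h_v(p): variance of the SUM join estimator when the second table is
   concentrated on join value v. a = a_v, mu = mu_v, s2 = sigma_v^2, nb = n_b. *)
Definition hv {R : realFieldType} (e1 e2 : R) (nb : nat) (a : nat) (mu s2 : R)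
    (p : R) : R :=
  (e2^-1 - p^-1) * (a%:R ^+ 2) * (mu ^+ 2) * nb%:R
  + (e1^-1 - p^-1) * a%:R * (mu ^+ 2 + s2) * (nb%:R ^+ 2)
  + (p / (e1 * e2) - e1^-1 - e2^-1 + p^-1) * a%:R * (mu ^+ 2 + s2) * nb%:R
  + (p^-1 - 1) * (a%:R ^+ 2) * (mu ^+ 2) * (nb%:R ^+ 2).

(* h^*(p) = max_{v in U} h_v(p); the fold is seeded with h_{v0}(p) for some
   v0 in U (U nonempty), so it is exactly the maximum over U. *)
Definition hstar {R : realFieldType} {U : finType} (v0 : U) (e1 e2 : R) (nb : nat)
    (a : U -> nat) (mu s2 : U -> R) (p : R) : R :=
  \big[Num.max/hv e1 e2 nb (a v0) (mu v0) (s2 v0) p]_(v : U)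
     hv e1 e2 nb (a v) (mu v) (s2 v) p.

From HB Require Import structures.
From mathcomp Require Import all_boot all_order all_algebra.
From mathcomp Require Import ring.
Import Order.TTheory GRing.Theory Num.Theory.
Local Open Scope ring_scope.

(* Each h_v(p) is a combination A(p) a_v^2 mu_v^2 + B(p) a_v (mu_v^2 + sigma_v^2)
   whose coefficients A, B do not depend on v and are nonnegative on I.  Hence
   h_v <= A(p) a_{v1}^2 mu_{v1}^2 + B(p) a_{v2}(mu_{v2}^2 + sigma_{v2}^2)
       <= h_{v1} + h_{v2} <= 2 h',
   so h' <= h^* <= 2 h' on I, and a minimiser of h' is a 2-approximate
   minimiser of h^*. *)

Lemma sandwich_argmin_approx (R : numDomainType) (T : Type) (I : pred T)
    (f g : T -> R) (c : R) (p' q : T) :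
  0 <= c -> (forall p, g p <= f p) -> (forall p, I p -> f p <= c * g p) ->
  I p' -> (forall p, I p -> g p' <= g p) -> I q ->
  f p' <= c * f q.
Proof.
move=> c_ge0 gf fg Ip' p'_min Iq.
apply: le_trans (fg _ Ip') _; apply: ler_wpM2l => //.
exact: le_trans (p'_min _ Iq) (gf q).
Qed.

Lemma addr_le_max2 {R : realDomainType} (x y : R) : x + y <= 2 * Num.max x y.
Proof. by rewrite mulr_natl mulr2n lerD // le_max lexx ?orbT. Qed.

Lemma subr_inv_ge0 {R : numFieldType} (x p : R) : 0 < x -> x <= p -> 0 <= x^-1 - p^-1.
Proof.
move=> x_gt0 le_xp; have p_gt0 : 0 < p := lt_le_trans x_gt0 le_xp.
by rewrite subr_ge0 lef_pV2 ?posrE.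
Qed.

Section HvCoefficients.
Variables (R : realFieldType) (e1 e2 : R) (nb : nat).

Definition hv_coef_sq (p : R) : R :=
  (e2^-1 - p^-1) * nb%:R + (p^-1 - 1) * nb%:R ^+ 2.

Definition hv_coef_mom (p : R) : R :=
  (e1^-1 - p^-1) * nb%:R ^+ 2 + (p / (e1 * e2) - e1^-1 - e2^-1 + p^-1) * nb%:R.

Lemma hvE a mu s2 p : hv e1 e2 nb a mu s2 p =
  hv_coef_sq p * (a%:R ^+ 2 * mu ^+ 2) + hv_coef_mom p * (a%:R * (mu ^+ 2 + s2)).
Proof. by rewrite /hv /hv_coef_sq /hv_coef_mom; ring. Qed.

Hypotheses (e1_gt0 : 0 < e1) (e2_gt0 : 0 < e2).

Lemma hv_coef_sq_ge0 p : Num.max e1 e2 <= p <= 1 -> 0 <= hv_coef_sq p.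
Proof.
rewrite ge_max => /andP [/andP [_ le_e2p] le_p1].
have p_gt0 : 0 < p := lt_le_trans e2_gt0 le_e2p.
rewrite addr_ge0 // mulr_ge0 ?exprn_ge0 //; first exact: subr_inv_ge0.
by rewrite -invr1 subr_inv_ge0.
Qed.

Lemma hv_coef_mom_ge0 p : Num.max e1 e2 <= p <= 1 -> 0 <= hv_coef_mom p.
Proof.
rewrite ge_max => /andP [/andP [le_e1p le_e2p] _].
have p_gt0 : 0 < p := lt_le_trans e2_gt0 le_e2p.
rewrite /hv_coef_mom.
have -> : p / (e1 * e2) - e1^-1 - e2^-1 + p^-1 = (p - e1) * (p - e2) / (p * e1 * e2).
  by field; rewrite ?mulf_neq0 ?gt_eqF.
rewrite addr_ge0 // mulr_ge0 ?exprn_ge0 //; first exact: subr_inv_ge0.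
by rewrite divr_ge0 ?mulr_ge0 ?subr_ge0 // ltW // !mulr_gt0.
Qed.

Section Domination.
Variables (U : finType) (a : U -> nat) (mu s2 : U -> R) (v1 v2 : U).
Hypothesis s2_ge0 : forall v, 0 <= s2 v.
Hypothesis v1_max : forall v, (a v)%:R ^+ 2 * mu v ^+ 2 <= (a v1)%:R ^+ 2 * mu v1 ^+ 2.
Hypothesis v2_max :
  forall v, (a v)%:R * (mu v ^+ 2 + s2 v) <= (a v2)%:R * (mu v2 ^+ 2 + s2 v2).

Local Notation h v p := (hv e1 e2 nb (a v) (mu v) (s2 v) p).

Lemma hv_le_add v p : Num.max e1 e2 <= p <= 1 -> h v p <= h v1 p + h v2 p.
Proof.
move=> Ip; have A_ge0 := hv_coef_sq_ge0 p Ip; have B_ge0 := hv_coef_mom_ge0 p Ip.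
rewrite !hvE addrACA lerD //.
  rewrite -[leLHS]addr0 lerD ?(ler_wpM2l A_ge0 (v1_max v)) //.
  by rewrite mulr_ge0 // mulr_ge0 // sqr_ge0.
rewrite -[leLHS]add0r lerD ?(ler_wpM2l B_ge0 (v2_max v)) //.
by rewrite mulr_ge0 // mulr_ge0 // addr_ge0 // sqr_ge0.
Qed.

Lemma hstar_le_max2 (v0 : U) p : Num.max e1 e2 <= p <= 1 ->
  hstar v0 e1 e2 nb a mu s2 p <= 2 * Num.max (h v1 p) (h v2 p).
Proof.
move=> Ip; apply: bigmax_le => [|v _];
  exact: le_trans (hv_le_add _ p Ip) (addr_le_max2 _ _).
Qed.

Lemma max2_le_hstar (v0 : U) p :
  Num.max (h v1 p) (h v2 p) <= hstar v0 e1 e2 nb a mu s2 p.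
Proof. by rewrite ge_max !(le_bigmax _ (fun v => h v p)). Qed.

End Domination.
End HvCoefficients.

Theorem corollary2 (R : realFieldType) (U : finType) (v0 : U)
    (e1 e2 : R) (nb : nat) (a : U -> nat) (mu s2 : U -> R)
    (v1 v2 : U) (p' pstar : R) :
  0 < e1 <= 1 -> 0 < e2 <= 1 -> (0 < nb)%N ->
  (forall v, 0 <= s2 v) ->
  (forall v, (a v)%:R ^+ 2 * mu v ^+ 2 <= (a v1)%:R ^+ 2 * mu v1 ^+ 2) ->
  (forall v, (a v)%:R * (mu v ^+ 2 + s2 v) <= (a v2)%:R * (mu v2 ^+ 2 + s2 v2)) ->
  let h v p := hv e1 e2 nb (a v) (mu v) (s2 v) p in
  let hs p := hstar v0 e1 e2 nb a mu s2 p in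
  let h' p := Num.max (h v1 p) (h v2 p) in
  let inI p := Num.max e1 e2 <= p <= 1 in
  inI p' -> (forall p, inI p -> h' p' <= h' p) ->
  inI pstar -> (forall p, inI p -> hs pstar <= hs p) ->
  hs p' <= 2 * hs pstar.
Proof.
move=> /andP [e1_gt0 _] /andP [e2_gt0 _] _ s2_ge0 v1_max v2_max h hs h' inI
  Ip' p'_min Ipstar _.
(* The bound holds against every point of I. *)
apply: (sandwich_argmin_approx _ _ inI hs h') => //.
- exact: max2_le_hstar.
- by move=> p; apply: hstar_le_max2.
Qed.
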